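(* Let $1<\chi\le\rho$. The strategy driven by a $(\rho,\chi)$-bidding profile is $\rho$-robust and $\chi$-consistent.
   Context: Online bidding with target $T>0$ and prediction normalized to $1$: a bidder submits increasing positive bids until one is $\ge T$; the cost is the sum of bids up to and including the first bid $\ge T$. A (randomized) strategy $B$ with expected cost $\mathrm{cost}_B(T)$ is $\chi$-consistent if $\mathrm{cost}_B(1)\le\chi$ and $\rho$-robust if $\mathrm{cost}_B(T)\le\rho T$ for all $T>0$. Given $1<\chi\le\rho$, a $(\rho,\chi)$-bidding profile is a non-decreasing, left-continuous $G:\mathbb{R}\to(0,\infty)$ with (offset) $G(x)<1$ for $x<0$ and $G(x)\ge1$ for $x>0$; (robustness) $\int_{-\infty}^{x+1}G(t)\,\mathrm{d} t\le\rho G(x)$ for all $x\in\mathbb{R}$; (consistency) $\int_{-\infty}^1 G(t)\,\mathrm{d} t\le\chi$. The strategy driven by $G$ is the random bid sequence $(G(n+U))_{n\in\mathbb{Z}}$ with a single shared $U\sim\mathrm{Unif}(0,1]$; on target $T$ its cost is $\sum_{n\le n_*}G(n+U)$ where $n_*=\min\{n:G(n+U)\ge T\}$. *)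

From HB Require Import structures.
From mathcomp Require Import all_boot all_order all_algebra.
From mathcomp Require Import all_classical all_reals all_analysis.
Set Implicit Arguments. Unset Strict Implicit. Unset Printing Implicit Defensive.
Import Order.TTheory GRing.Theory Num.Theory.
Import numFieldNormedType.Exports.
Local Open Scope classical_set_scope.
Local Open Scope ring_scope.

Definition bidding_profile (R : realType) (rho chi : R) (G : R -> R) : Prop :=
  [/\ (forall x, 0 < G x) /\ {homo G : x y / x <= y},
      (forall a : R, G x @[x --> a^'-] --> G a),
      (forall x, x < 0 -> G x < 1) /\ (forall x, 0 < x -> 1 <= G x),
      (forall x : R, (\int[lebesgue_measure]_(t in `]-oo, (x + 1)%R]) (G t)%:E
                       <= (rho * G x)%:E)%E)
    & (\int[lebesgue_measure]_(t in `]-oo, 1%R]) (G t)%:E <= chi%:E)%E ].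

(* Bid n (for n : int) of the strategy driven by G, for the shared value u of U. *)
Definition bid (R : realType) (G : R -> R) (u : R) (n : int) : R := G (n%:~R + u).

(* Cost on target T for a realization u of U: the sum of all bids that are
   actually submitted, i.e. bids n such that every earlier bid m < n was < T.
   These are exactly the n <= n_* where n_* = min {n | G(n+u) >= T}. *)
Definition cost_at (R : realType) (G : R -> R) (T u : R) : \bar R :=
  (\esum_(n in [set n : int | forall m : int, (m < n)%R -> (bid G u m < T)%R])
      (bid G u n)%:E)%E.

Definition exp_cost (R : realType) (G : R -> R) (T : R) : \bar R :=
  (\int[lebesgue_measure]_(u in `]0%R, 1%R]) cost_at G T u)%E.

(* A bid n + 1 is submitted only if bid n = G(n + U) is still below the target,
   so every submitted bid sits at a point n + U <= s + 1, where s is the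
   supremum of the sublevel set {x | G x < T}; left continuity gives G(s) <= T,
   and for the prediction T = 1 the offset condition gives s <= 0.  As U runs
   over ]0, 1], the points n + U with n ranging over the integers below a fixed
   bound tile a half-line exactly once, so the expected cost is at most the
   integral of G over ]-oo, s + 1], which robustness bounds by rho G(s) <= rho T
   and consistency bounds by chi. *)

From mathcomp Require Import all_boot all_order all_algebra.
From mathcomp Require Import all_classical all_reals all_analysis.
From mathcomp Require Import measurable_realfun.
From mathcomp Require Import lra zify.
Set Implicit Arguments. Unset Strict Implicit. Unset Printing Implicit Defensive.
Import Order.TTheory GRing.Theory Num.Theory.
Import numFieldNormedType.Exports.
Local Open Scope classical_set_scope.
Local Open Scope ring_scope.

Section nonmeasurable_integral.
Context d (T : measurableType d) (R : realType) (mu : {measure set T -> \bar R}).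

Lemma ge0_le_integral_nomeas (D : set T) (f g : T -> \bar R) :
  (forall x, D x -> (0 <= f x)%E) -> (forall x, D x -> (f x <= g x)%E) ->
  (\int[mu]_(x in D) f x <= \int[mu]_(x in D) g x)%E.
Proof.
move=> f0 fg.
have g0 x : D x -> (0 <= g x)%E by move=> Dx; exact: le_trans (f0 x Dx) (fg x Dx).
rewrite !ge0_integralE //; apply: ge_ereal_sup => _ [h hf <-].
apply: ereal_sup_ubound; exists h => //= x.
by apply: le_trans (hf x) _; exact: lee_restrict.
Qed.

End nonmeasurable_integral.

Lemma le_esum_subset (R : realType) (T : choiceType) (I J : set T) (a b : T -> \bar R) :
  I `<=` J -> (forall i, I i -> (a i <= b i)%E) ->
  (\esum_(i in I) a i <= \esum_(i in J) b i)%E.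
Proof.
move=> IJ le_ab; rewrite ge_ereal_sup => //= _ [X [finX XI]] <-; rewrite esum_ge//.
exists X; first by split => //; exact: subset_trans XI IJ.
by apply: lee_fsum => // t /XI /le_ab.
Qed.

Section lebesgue_shift.
Variable R : realType.
Local Notation mu := (@lebesgue_measure R).

(* The cast puts the shift on the sigma-algebra on which lebesgue_measure lives. *)
Local Notation shiftR c := ((fun x => x + c) : measurableTypeR R -> measurableTypeR R).

Lemma measurable_fun_addr (c : R) : measurable_fun setT (shiftR c).
Proof. by apply: nondecreasing_measurable => // x y xy; rewrite lerD2r. Qed.

Lemma pushforward_lebesgue_shift (c : R) (A : set R) : measurable A ->
  pushforward mu (shiftR c) A = mu A.
Proof.
move=> mA; apply/esym/lebesgue_measure_unique => //=; first exact: measurable_fun_addr.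
move=> _ X [[a b] _ <-] /=; rewrite /pushforward.
have -> : (fun x : R => x + c) @^-1` `]a, b] = `]a - c, b - c]%classic.
  by apply/seteqP; split => x /=; rewrite !in_itv /= ltrBlDr lerBrDr.
rewrite !lebesgue_measure_itv /= !lte_fin ltrD2r.
by case: ifP => // _; rewrite -!EFinD; congr (_%:E); lra.
Qed.

Lemma ge0_integral_shift (c : R) (D : set R) (F : R -> \bar R) :
  measurable D -> measurable_fun D F -> (forall x, D x -> (0 <= F x)%E) ->
  (\int[mu]_(x in D) F x = \int[mu]_(x in (fun x => x + c)%R @^-1` D) F (x + c)%R)%E.
Proof.
move=> mD mF F0.
rewrite -[RHS](@ge0_integral_pushforward _ _ _ _ _ _ (measurable_fun_addr c) mu D F) //;
  last by move=> x; rewrite inE => /F0.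
apply: eq_measure_integral; first exact: measurable_fun_addr.
by move=> ? A mA _; exact/esym/pushforward_lebesgue_shift.
Qed.

Lemma nneseries_integral_unit_shifts_le (F : R -> \bar R) (c : R) :
  measurable_fun setT F -> (forall x, (0 <= F x)%E) ->
  (\sum_(k <oo) \int[mu]_(u in `]0%R, 1%R]) F (u + (c - k%:R))%R
    <= \int[mu]_x F x)%E.
Proof.
move=> mF F0; pose I (k : nat) := `](c - k%:R), (c - k%:R) + 1]%classic.
have mI k : measurable (I k) by exact: measurable_itv.
have shiftI k : (\int[mu]_(u in `]0%R, 1%R]) F (u + (c - k%:R))%R
                 = \int[mu]_(x in I k) F x)%E.
  rewrite (ge0_integral_shift (c - k%:R) (mI k) (measurable_funS measurableT (@subsetT _ _) mF)
             (fun x _ => F0 x)).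
  congr (integral _ _ _); apply/seteqP; split => x;
    by rewrite /I /= !in_itv /= => /andP[? ?]; apply/andP; split; lra.
rewrite (eq_eseriesr (fun k _ => shiftI k)).
have tI : trivIset setT I.
  apply/trivIsetP => i j _ _ ij; apply/seteqP; split => // x [].
  rewrite /I /= !in_itv /= => /andP[? ?] /andP[? ?].
  have : (j%:R < i%:R + 1 :> R) /\ (i%:R < j%:R + 1 :> R) by split; lra.
  by rewrite !natr1 !ltr_nat => -[? ?]; move: ij; lia.
rewrite -ge0_integral_bigcup //; last exact: measurable_funS mF.
by apply: ge0_subset_integral => //; apply: bigcup_measurable => k _; exact: measurable_itv.
Qed.

End lebesgue_shift.

Lemma nondecreasing_measurable_EFin (R : realType) (G : R -> R) :
  {homo G : x y / x <= y} -> measurable_fun setT (EFin \o G).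
Proof. by move=> Gnd; apply/measurable_EFinP; exact: nondecreasing_measurable. Qed.

Definition submitted (R : realType) (G : R -> R) (T u : R) : set int :=
  [set n | forall m : int, m < n -> bid G u m < T].

Section expected_cost.
Variable R : realType.
Local Notation mu := (@lebesgue_measure R).

Lemma submitted_prev_lt (G : R -> R) (T u : R) (n : int) :
  submitted G T u n -> G (n%:~R + u - 1) < T.
Proof. by move=> /(_ (n - 1)); rewrite /bid rmorphB /= addrAC => -> //; lia. Qed.

Lemma exp_cost_eq0 (G : R -> R) (T : R) :
  (forall x, T <= G x) -> exp_cost G T = 0%E.
Proof.
move=> TG; rewrite /exp_cost (eq_integral (cst 0%E)) ?integral0 // => u _ /=.
rewrite /cost_at; suff -> : [set n : int | forall m, m < n -> bid G u m < T] = set0.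
  by rewrite esum_set0.
by apply/seteqP; split => // n /submitted_prev_lt; rewrite ltNge TG.
Qed.

Lemma cost_at_le_nneseries (G : R -> R) (T b u : R) (c : int) :
  (forall x, 0 < G x) -> 0 < u -> b <= c%:~R ->
  (forall n, submitted G T u n -> n%:~R + u <= b) ->
  (cost_at G T u
    <= \sum_(k <oo) ((EFin \o G) \_ `]-oo, b]) (u + (c%:~R - k%:R))%R)%E.
Proof.
move=> Gpos u0 bc ub; set F := (EFin \o G) \_ _.
apply: (@le_trans _ _ (\esum_(n in [set n : int | (n <= c)%R]) F (n%:~R + u)%R)%E).
  apply: le_esum_subset => n /ub nb /=.
    by rewrite -(ler_int R); apply: le_trans bc; apply: le_trans nb; rewrite lerDl ltW.
  by rewrite /F /patch ifT // inE /= in_itv.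
rewrite (@reindex_esum _ _ _ setT _ (fun k : nat => c - k%:Z)); last first.
  split=> [k _ /=|i j _ _|n /= nc]; [lia | lia | by exists `|c - n|%N => //=; lia].
rewrite -nneseries_esumT; last by move=> k; rewrite /F /patch; case: ifP; rewrite // lee_fin ltW.
by under eq_eseriesr do rewrite rmorphB /= addrC.
Qed.

Lemma exp_cost_le_integral (G : R -> R) (T b : R) :
  (forall x, 0 < G x) -> {homo G : x y / x <= y} ->
  (forall u n, 0 < u -> submitted G T u n -> n%:~R + u <= b) ->
  (exp_cost G T <= \int[mu]_(t in `]-oo, b]) (G t)%:E)%E.
Proof.
move=> Gpos Gnd ub; pose F := (EFin \o G) \_ `]-oo, b]; pose c := Num.ceil b.
have F0 t : (0 <= F t)%E by rewrite /F /patch; case: ifP; rewrite // lee_fin ltW.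
have mF : measurable_fun setT F.
  apply/(measurable_restrictT _ _).1 => //.
  exact: measurable_funS measurableT (@subsetT _ _) (nondecreasing_measurable_EFin Gnd).
apply: (@le_trans _ _
  (\int[mu]_(u in `]0%R, 1%R]) \sum_(k <oo) F (u + (c%:~R - k%:R))%R)%E).
  apply: ge0_le_integral_nomeas => [u _|u].
    by rewrite /cost_at; apply: esum_ge0 => n _; rewrite lee_fin; exact/ltW/Gpos.
  rewrite /= in_itv /= => /andP[u0 _].
  by apply: cost_at_le_nneseries => // [|n]; [exact: ceil_ge | exact: ub].
rewrite integral_nneseries // => [|k]; last first.
  apply: measurable_funS (@subsetT _ _) _ => //.
  exact: measurableT_comp mF (measurable_fun_addr _).
by rewrite integral_mkcond; exact: nneseries_integral_unit_shifts_le.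
Qed.

End expected_cost.

Lemma le_sup_sublevel (R : realType) (G : R -> R) (T : R) :
  {homo G : x y / x <= y} -> has_sup [set x | G x < T] ->
  G x @[x --> (sup [set x | G x < T])^'-] --> G (sup [set x | G x < T]) ->
  G (sup [set x | G x < T]) <= T.
Proof.
move=> Gnd supE; set s := sup _ => Gs; rewrite leNgt; apply/negP => Ts.
have above : \forall t \near s^'-, T < G t by exact: cvgr_gt Gs _ Ts.
have below : \forall t \near s^'-, G t < T.
  apply: filterS (nbhs_left_lt s) => t; rewrite -subr_gt0 => ts.
  have [e Ge se] := sup_adherent ts supE.
  by apply: le_lt_trans Ge; apply: Gnd; move: se; rewrite -/s; lra.
have [t []] := @filter_ex _ _ (at_left_proper_filter s) _ (filterI above below).
lra.
Qed.

Section bidding_profile.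
Variables (R : realType) (rho chi : R) (G : R -> R).
Hypothesis profileG : bidding_profile rho chi G.
Local Notation mu := (@lebesgue_measure R).

Lemma profile_integral_ge (y : R) : 0 < y ->
  (y%:E <= \int[mu]_(t in `]-oo, y]) (G t)%:E)%E.
Proof.
move=> y0; have [[Gpos Gnd] _ [_ Gge1] _ _] := profileG.
apply: (@le_trans _ _ (\int[mu]_(t in `]0%R, y]) (G t)%:E)%E); last first.
  apply: ge0_subset_integral => //.
  - exact: measurable_funS measurableT (@subsetT _ _) (nondecreasing_measurable_EFin Gnd).
  - by move=> t _; rewrite lee_fin; exact/ltW/Gpos.
  - by move=> t /=; rewrite !in_itv /= => /andP[].
apply: (@le_trans _ _ (\int[mu]_(t in `]0%R, y]) 1)%E).
  by rewrite integral_cst //= lebesgue_measure_itv /= lte_fin y0 mul1e oppr0 adde0.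
apply: ge0_le_integral_nomeas => [t _|t]; first by rewrite lee_fin.
by rewrite /= in_itv /= => /andP[t0 _]; rewrite lee_fin Gge1.
Qed.

Lemma profile_sublevel_lt (T x : R) : 0 < rho -> G x < T -> x < rho * T.
Proof.
move=> rho0 GxT; have [[Gpos _] _ _ Grob _] := profileG.
have [x_le0|x_gt0] := leP x 0.
  by apply: le_lt_trans x_le0 _; rewrite mulr_gt0 // (lt_trans (Gpos x)).
have x1_gt0 : 0 < x + 1 by lra.
have := le_trans (profile_integral_ge x1_gt0) (Grob x).
rewrite lee_fin; have : rho * G x < rho * T by rewrite ltr_pM2l.
lra.
Qed.

Lemma profile_robust (T : R) : 0 < rho -> 0 < T -> (exp_cost G T <= (rho * T)%:E)%E.
Proof.
move=> rho0 T0; have [[Gpos Gnd] Glc _ Grob _] := profileG.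
have [[x0 Gx0]|noE] := pselect (exists x, G x < T); last first.
  rewrite exp_cost_eq0 ?lee_fin ?mulr_ge0 ?ltW // => x.
  by rewrite leNgt; apply/negP => Gx; apply: noE; exists x.
have supE : has_sup [set x | G x < T].
  by split; [exists x0 | exists (rho * T) => x /(profile_sublevel_lt rho0) /ltW].
pose s := sup [set x | G x < T].
have Gs : G s <= T by exact: le_sup_sublevel.
apply: le_trans (exp_cost_le_integral (b := s + 1) Gpos Gnd _) _.
  by move=> u n _ /submitted_prev_lt /(sup_upper_bound supE); rewrite -/s; lra.
by apply: le_trans (Grob s) _; rewrite lee_fin ler_pM2l.
Qed.

Lemma profile_consistent : (exp_cost G 1 <= chi%:E)%E.
Proof.
have [[Gpos Gnd] _ [_ Gge1] _ Gcons] := profileG.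
apply: le_trans (exp_cost_le_integral (b := 1) Gpos Gnd _) Gcons.
move=> u n _ /submitted_prev_lt Glt1.
have : n%:~R + u - 1 <= 0 by rewrite leNgt; apply/negP => /Gge1; rewrite leNgt Glt1.
lra.
Qed.

End bidding_profile.

Theorem corollary1 (R : realType) (rho chi : R) (G : R -> R) :
  1 < chi -> chi <= rho -> bidding_profile rho chi G ->
  (forall T : R, 0 < T -> (exp_cost G T <= (rho * T)%:E)%E) /\
  (exp_cost G 1 <= chi%:E)%E.
Proof.
move=> chi_gt1 chi_le_rho profileG; split; last exact: profile_consistent profileG.
by move=> T; apply: (profile_robust profileG); lra.
Qed.
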